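(* Let $F_2=\langle x,y\rangle$ be the free group of rank $2$, and for $i=1,2,\ldots$ let $$a_i(x,y)=y^{(x y^i)^{2} x^{-1}}\, y^{-x}\in F_2 .$$ Let $\bar F=\langle a_i(x,y)\mid i=1,2,\ldots\rangle\le F_2$. For any subgroup $N$ of $\bar F$, let $\bar N$ be the normal closure of $N$ in $\bar F$ and $\tilde N$ the normal closure of $N$ in $F_2$. Then $\bar F\cap\tilde N=\bar N$.
   Context: Notation: $u^v=v^{-1}uv$ and $u^{-v}=(u^{-1})^v$. *)

From mathcomp Require Import all_boot.
Set Implicit Arguments. Unset Strict Implicit. Unset Printing Implicit Defensive.

(* A letter (g, e): g = false means x, g = true means y; e = true means inverse. *)
Definition letter := (bool * bool)%type.
Definition word := seq letter.

Definition inv_letter (l : letter) : letter := (l.1, ~~ l.2).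
Definition cancels (a b : letter) : bool := (a.1 == b.1) && (a.2 != b.2).

Fixpoint reducedb (w : word) : bool :=
  match w with
  | a :: ((b :: _) as t) => ~~ cancels a b && reducedb t
  | _ => true
  end.

Definition push (l : letter) (w : word) : word :=
  match w with
  | b :: t => if cancels l b then t else l :: w
  | [::] => [:: l]
  end.
Definition reduce (w : word) : word := foldr push [::] w.

Lemma reducedb_tail a t : reducedb (a :: t) -> reducedb t.
Proof. by case: t => //= b t /andP[]. Qed.

Lemma push_reduced l w : reducedb w -> reducedb (push l w).
Proof.
case: w => [|b t] // H; rewrite /push.
case: ifP => Hc; first exact: (reducedb_tail H).
by move: H; rewrite /= Hc.
Qed.

Lemma reduce_reduced w : reducedb (reduce w).
Proof. by elim: w => //= l w IH; apply: push_reduced. Qed.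

Definition F2 := {w : word | reducedb w}.

Definition one : F2 := exist _ [::] isT.
Definition mul (u v : F2) : F2 :=
  exist _ (reduce (sval u ++ sval v)) (reduce_reduced _).
Definition inv (u : F2) : F2 :=
  exist _ (reduce (rev (map inv_letter (sval u)))) (reduce_reduced _).
Definition xgen : F2 := exist _ [:: (false, false)] isT.
Definition ygen : F2 := exist _ [:: (true, false)] isT.

(* u ^ v = v^-1 u v *)
Definition conj (u v : F2) : F2 := mul (inv v) (mul u v).
Definition pow (u : F2) (n : nat) : F2 := iter n (mul u) one.

Definition a_elt (i : nat) : F2 :=
  mul (conj ygen (mul (pow (mul xgen (pow ygen i)) 2) (inv xgen)))
      (conj (inv ygen) xgen).

Definition subgroup (H : F2 -> Prop) : Prop :=
  [/\ H one, (forall u v, H u -> H v -> H (mul u v)) & (forall u, H u -> H (inv u))].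

Definition gen (S : F2 -> Prop) (g : F2) : Prop :=
  forall H, subgroup H -> (forall s, S s -> H s) -> H g.

Definition Fbar : F2 -> Prop := gen (fun g => exists i, 0 < i /\ g = a_elt i).

Definition ncl (K N : F2 -> Prop) (g : F2) : Prop :=
  forall H, subgroup H -> (forall h, H h -> K h) -> (forall n, N n -> H n) ->
    (forall k h, K k -> H h -> H (conj h k)) -> H g.

Definition F2all : F2 -> Prop := fun _ => True.

(* The inclusion of the normal closure of N in Fbar into Fbar ∩ Ñ is formal.
   For the converse, any right F2-set X is embedded into an F2-set on
   Z * (X * (Z * W)), W the reduced words over nat * {±1}, on which Fbar acts
   through X at the base points (0, (c, (0, []))) and trivially elsewhere:
   x shifts the first coordinate (the level), and y acts on each level by a
   permutation chosen so that the word a_i moves nothing off level 0, while on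
   level 0 the counter and the word W remember i long enough for the level -1
   to translate c by a_i exactly at base points.
   Taking for X the subsets of F2 acted on by right translation, the right
   cosets of N̄ with representatives in Fbar form an invariant family fixed by
   N, hence by Ñ.  An element g of Fbar ∩ Ñ thus fixes the base point with
   c = N̄, i.e. N̄g = N̄ and g ∈ N̄. *)

From Stdlib Require Import ZArith Lia FunctionalExtensionality PropExtensionality.
From mathcomp Require Import all_boot.

Set Implicit Arguments.
Unset Strict Implicit.
Unset Printing Implicit Defensive.

Lemma iter_cancel (T : Type) (f g : T -> T) n :
  cancel f g -> cancel (iter n f) (iter n g).
Proof.
by move=> fK; elim: n => // n IHn x; rewrite [iter n.+1 g _]iterSr iterS fK IHn.
Qed.

(** * Reduced words *)

Section ReducedWords.

Variable A : eqType.
Implicit Types (l a b : A * bool) (u v w r : seq (A * bool)).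

Definition flip_letter l : A * bool := (l.1, ~~ l.2).
Definition cancelw a b : bool := (a.1 == b.1) && (a.2 != b.2).

Fixpoint reducedw w : bool :=
  match w with
  | a :: ((b :: _) as t) => ~~ cancelw a b && reducedw t
  | _ => true
  end.

Definition pushw l w : seq (A * bool) :=
  if w is b :: t then (if cancelw l b then t else l :: w) else [:: l].

Definition reducew w : seq (A * bool) := foldr pushw [::] w.

Lemma cancelwE a b : cancelw a b = (b == flip_letter a).
Proof.
case: a b => [a1 a2] [b1 b2]; rewrite /cancelw /flip_letter /= xpair_eqE eq_sym.
by case: a2; case: b2.
Qed.

Lemma cancelw_flip l : cancelw (flip_letter l) l.
Proof. by rewrite cancelwE /flip_letter /= negbK; case: l. Qed.

Lemma flip_letterK : involutive flip_letter.
Proof. by case=> a e; rewrite /flip_letter negbK. Qed.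

Lemma reducedw_behead a w : reducedw (a :: w) -> reducedw w.
Proof. by case: w => //= b w /andP[]. Qed.

Lemma pushw_reduced l w : reducedw w -> reducedw (pushw l w).
Proof.
case: w => [|b t] //= Hw; case: ifP => [_|Hc]; first exact: reducedw_behead Hw.
by rewrite /= Hc.
Qed.

Lemma pushwK l w : reducedw w -> pushw (flip_letter l) (pushw l w) = w.
Proof.
case: w => [|b t]; first by rewrite /= cancelw_flip.
rewrite {2}/pushw; case: ifP => [|_ _]; last by rewrite /= cancelw_flip.
rewrite cancelwE => /eqP ->; case: t => [|c t] //= /andP[Hbc _].
by rewrite (negbTE Hbc).
Qed.

Lemma foldr_pushw_reduced r w : reducedw r -> reducedw (foldr pushw r w).
Proof. by move=> Hr; elim: w => //= l w; apply: pushw_reduced. Qed.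

Lemma reducew_reduced w : reducedw (reducew w).
Proof. exact: foldr_pushw_reduced. Qed.

Lemma reducew_id w : reducedw w -> reducew w = w.
Proof.
elim: w => //= a t IHt Hw; rewrite IHt; last exact: reducedw_behead Hw.
by case: t Hw {IHt} => //= b t /andP[/negbTE ->].
Qed.

Lemma foldr_pushw_push r l w : reducedw r ->
  foldr pushw r (pushw l w) = pushw l (foldr pushw r w).
Proof.
move=> Hr; case: w => [|b t] //=; case: ifP => //; rewrite cancelwE => /eqP ->.
by rewrite -{1}[l]flip_letterK pushwK // foldr_pushw_reduced.
Qed.

Lemma foldr_pushw_reducew r w :
  reducedw r -> foldr pushw r (reducew w) = foldr pushw r w.
Proof. by move=> Hr; elim: w => //= l w IHw; rewrite foldr_pushw_push // IHw. Qed.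

Lemma reducew_cat u v : reducew (u ++ v) = foldr pushw (reducew v) u.
Proof. exact: foldr_cat. Qed.

Lemma reducew_catA u v w :
  reducew (reducew (u ++ v) ++ w) = reducew (u ++ reducew (v ++ w)).
Proof.
rewrite reducew_cat foldr_pushw_reducew ?reducew_reduced // foldr_cat.
by rewrite reducew_cat (reducew_id (reducew_reduced _)) reducew_cat.
Qed.

Lemma foldr_pushwK r w : reducedw r ->
  foldr pushw (foldr pushw r w) (rev (map flip_letter w)) = r.
Proof.
elim: w r => //= l w IHw r Hr.
by rewrite rev_cons foldr_rcons pushwK ?IHw ?foldr_pushw_reduced.
Qed.

Lemma foldr_pushwVK r w : reducedw r ->
  foldr pushw (foldr pushw r (rev (map flip_letter w))) w = r.
Proof.
elim: w r => //= l w IHw r Hr.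
rewrite rev_cons foldr_rcons IHw ?pushw_reduced //.
by rewrite -{1}[l]flip_letterK pushwK.
Qed.

Lemma reducew_catVw w : reducew (reducew (rev (map flip_letter w)) ++ w) = [::].
Proof.
by rewrite reducew_cat foldr_pushw_reducew ?reducew_reduced // /reducew foldr_pushwK.
Qed.

Lemma reducew_catwV w : reducew (w ++ reducew (rev (map flip_letter w))) = [::].
Proof.
by rewrite reducew_cat (reducew_id (reducew_reduced _)) /reducew foldr_pushwVK.
Qed.

Section WordAction.

Variables (T : Type) (f : A * bool -> T -> T).
Hypothesis fK : forall l, cancel (f l) (f (flip_letter l)).

Definition actw w (o : T) : T := foldl (fun o l => f l o) o w.

Lemma actw_pushw l w o : actw (pushw l w) o = actw (l :: w) o.
Proof.
case: w => [|b t] //=; case: ifP => // /[!cancelwE] /eqP ->.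
by rewrite /= fK.
Qed.

Lemma actw_reducew w o : actw (reducew w) o = actw w o.
Proof. by elim: w o => //= l w IHw o; rewrite actw_pushw /= IHw. Qed.

End WordAction.
End ReducedWords.

Lemma mulA u v w : mul (mul u v) w = mul u (mul v w).
Proof. by apply: val_inj; exact: reducew_catA. Qed.

Lemma mul1g u : mul one u = u.
Proof. by apply: val_inj; exact: reducew_id (valP u). Qed.

Lemma mulg1 u : mul u one = u.
Proof. by apply: val_inj; rewrite /= cats0; exact: reducew_id (valP u). Qed.

Lemma mulVg u : mul (inv u) u = one.
Proof. by apply: val_inj; exact: reducew_catVw. Qed.

Lemma mulgV u : mul u (inv u) = one.
Proof. by apply: val_inj; exact: reducew_catwV. Qed.

Lemma mulKg u v : mul (inv u) (mul u v) = v.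
Proof. by rewrite -mulA mulVg mul1g. Qed.

Lemma mulKVg u v : mul u (mul (inv u) v) = v.
Proof. by rewrite -mulA mulgV mul1g. Qed.

Lemma mulgKV u v : mul (mul v (inv u)) u = v.
Proof. by rewrite mulA mulVg mulg1. Qed.

Lemma inv_uniq u v : mul u v = one -> v = inv u.
Proof. by move=> uv1; rewrite -(mulKg u v) uv1 mulg1. Qed.

Lemma invK u : inv (inv u) = u.
Proof. by symmetry; apply: inv_uniq; rewrite mulVg. Qed.

Lemma inv1 : inv one = one.
Proof. by symmetry; apply: inv_uniq; rewrite mulg1. Qed.

Lemma inv_mul u v : inv (mul u v) = mul (inv v) (inv u).
Proof. by symmetry; apply: inv_uniq; rewrite mulA mulKVg mulgV. Qed.

(** * Subgroups, normal closures and right actions *)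

Lemma subgroup_conj (H : F2 -> Prop) h k : subgroup H -> H h -> H k -> H (conj h k).
Proof. by case=> _ Hmul Hinv Hh Hk; apply: Hmul (Hinv _ Hk) (Hmul _ _ Hh Hk). Qed.

Lemma subgroupI (H K : F2 -> Prop) :
  subgroup H -> subgroup K -> subgroup (fun g => H g /\ K g).
Proof.
case=> H1 Hmul Hinv [K1 Kmul Kinv]; split=> [//|u v [Hu Ku] [Hv Kv]|u [Hu Ku]].
  by split; [apply: Hmul | apply: Kmul].
by split; [apply: Hinv | apply: Kinv].
Qed.

Lemma gen_subgroup S : subgroup (gen S).
Proof.
split=> [H [] //|u v Hu Hv H HH HS|u Hu H HH HS]; case: (HH) => _ Hmul Hinv.
  exact: Hmul (Hu H HH HS) (Hv H HH HS).
exact: Hinv (Hu H HH HS).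
Qed.

Lemma gen_base (S : F2 -> Prop) s : S s -> gen S s.
Proof. by move=> Ss H _; apply. Qed.

Lemma ncl_subgroup K M : subgroup (ncl K M).
Proof.
split=> [H [] //|u v Hu Hv H HH HK HM HC|u Hu H HH HK HM HC]; case: (HH) => _ Hmul Hinv.
  exact: Hmul (Hu H HH HK HM HC) (Hv H HH HK HM HC).
exact: Hinv (Hu H HH HK HM HC).
Qed.

Lemma ncl_base K (M : F2 -> Prop) n : M n -> ncl K M n.
Proof. by move=> Mn H _ _ HM _; apply: HM. Qed.

Lemma ncl_conj K M h k : K k -> ncl K M h -> ncl K M (conj h k).
Proof. by move=> Kk Hh H HH HK HM HC; apply: HC (Hh H HH HK HM HC). Qed.

Lemma Fbar_subgroup : subgroup Fbar.
Proof. exact: gen_subgroup. Qed.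

Lemma Fbar_a_elt i : 0 < i -> Fbar (a_elt i).
Proof. by move=> i_gt0; apply: gen_base; exists i. Qed.

Section RightAction.

Variables (T : Type) (ra : F2 -> T -> T).
Hypothesis ra1 : forall o, ra one o = o.
Hypothesis raM : forall u v o, ra (mul u v) o = ra v (ra u o).

Lemma raK u : cancel (ra u) (ra (inv u)).
Proof. by move=> o; rewrite -raM mulgV ra1. Qed.

Lemma raVK u : cancel (ra (inv u)) (ra u).
Proof. by move=> o; rewrite -raM mulVg ra1. Qed.

Lemma ra_conj h k o : ra (conj h k) o = ra k (ra h (ra (inv k) o)).
Proof. by rewrite !raM. Qed.

Lemma ra_pow u n o : ra (pow u n) o = iter n (ra u) o.
Proof. by elim: n o => //= n IHn o; rewrite raM IHn -iterSr. Qed.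

Lemma ra_agree_subgroup (rb : F2 -> T -> T) :
  (forall o, rb one o = o) -> (forall u v o, rb (mul u v) o = rb v (rb u o)) ->
  subgroup (fun g => ra g =1 rb g).
Proof.
move=> rb1 rbM; split=> [o|u v Hu Hv o|u Hu o]; first by rewrite ra1 rb1.
  by rewrite raM rbM Hu Hv.
have rbVK : rb u (rb (inv u) o) = o by rewrite -rbM mulVg rb1.
by rewrite -{1}rbVK -Hu raK.
Qed.

Lemma ncl_fixes (Q : T -> Prop) (N : F2 -> Prop) :
  (forall g o, Q o -> Q (ra g o)) -> (forall n o, N n -> Q o -> ra n o = o) ->
  forall g, ncl F2all N g -> forall o, Q o -> ra g o = o.
Proof.
move=> Qra Nfix g Ng; apply: (Ng (fun g => forall o, Q o -> ra g o = o)) => //.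
- split=> [o _|u v Hu Hv o Qo|u Hu o Qo]; first exact: ra1.
    by rewrite raM Hu // Hv.
  by rewrite -{1}(Hu _ (Qra _ _ Qo)) raVK.
- by move=> n Nn o; apply: Nfix.
- by move=> k h _ Hh o Qo; rewrite ra_conj Hh ?raVK //; apply: Qra.
Qed.

End RightAction.

(** * An F2-set on which Fbar acts only at base points *)

Definition a_conjugator i : F2 := mul (pow (mul xgen (pow ygen i)) 2) (inv xgen).

Lemma a_eltE i : a_elt i = mul (conj ygen (a_conjugator i)) (conj (inv ygen) xgen).
Proof. by []. Qed.

Definition stack := {w : seq (nat * bool) | reducedw w}.

Definition pushs (l : nat * bool) (p : stack) : stack :=
  exist _ (pushw l (sval p)) (pushw_reduced l (valP p)).

Lemma pushsK e k p : pushs (k, ~~ e) (pushs (k, e) p) = p.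
Proof. by apply: val_inj; exact: pushwK (valP p). Qed.

Record tally := Tally { height : Z; trail : stack }.

Definition zsign (e : bool) : Z := if e then (-1)%Z else 1%Z.

Lemma zsignK e s : (s + zsign e + zsign (~~ e))%Z = s.
Proof. by case: e => /=; lia. Qed.

Definition mark (e : bool) (s : Z) (p : stack) : stack :=
  if (0 <? s)%Z then pushs (Z.to_nat s, e) p else p.

Lemma markK e s : cancel (mark e s) (mark (~~ e) s).
Proof. by move=> p; rewrite /mark; case: (0 <? s)%Z; rewrite ?pushsK. Qed.

Definition shift (e : bool) (r : tally) : tally :=
  Tally (height r + zsign e) (trail r).

(* Leaving a height [s > 0] records [(s, false)] and reaching a height [t > 0]
   records [(t, true)]; these records cancel in pairs, so climbing from height
   0 to height [i] only adds [(i, true)] on top of the trail. *)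
Definition climb (e : bool) (r : tally) : tally :=
  let t := (height r + zsign e)%Z in
  Tally t (mark true t (mark false (height r) (trail r))).

Lemma shiftK e : cancel (shift e) (shift (~~ e)).
Proof. by case=> s p; rewrite /shift /= zsignK. Qed.

Lemma climbK e : cancel (climb e) (climb (~~ e)).
Proof.
case=> s p; rewrite /climb /= zsignK.
by rewrite (markK true) (markK false).
Qed.

(* The direction alternates with the parity of [n], so that y acts inversely
   on the levels [n] and [n + 1] when [n > 0]. *)
Definition ymove (n : Z) (e : bool) (r : tally) : tally :=
  if (0 <? n)%Z then climb (e (+) Z.odd n) r
  else if (n =? 0)%Z then shift e r else r.

Lemma ymoveK n e : cancel (ymove n e) (ymove n (~~ e)).
Proof.
move=> r; rewrite /ymove; case: (0 <? n)%Z; first by rewrite addNb climbK.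
by case: (n =? 0)%Z; rewrite ?shiftK.
Qed.

Lemma ymove0 e : ymove 0 e =1 shift e.
Proof. by []. Qed.

Lemma ymove1 e : ymove 1 e =1 climb (~~ e).
Proof. by move=> r; rewrite /ymove /= addbT. Qed.

Lemma ymove_succ n e : (0 < n)%Z -> ymove (n + 1) e =1 ymove n (~~ e).
Proof.
move=> n_gt0 r; rewrite /ymove.
have -> : (0 <? n + 1)%Z by apply/Z.ltb_lt; lia.
have -> : (0 <? n)%Z by apply/Z.ltb_lt.
by rewrite Z.add_1_r Z.odd_succ -Z.negb_odd addbN addNb.
Qed.

Lemma ymove_neg n e : (n < 0)%Z -> ymove n e =1 id.
Proof.
move=> n_lt0 r; rewrite /ymove.
have -> : (0 <? n)%Z = false by apply/Z.ltb_ge; lia.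
by have -> : (n =? 0)%Z = false by apply/Z.eqb_neq; lia.
Qed.

Definition bottom_mark (w : seq (nat * bool)) : F2 :=
  if w is b :: t then (if last b t is (k.+1, true) then a_elt k.+1 else one) else one.

(* Only the bottom letter of the trail is read: the excursions made by the
   [a_elt] only change the top of the trail, so they set the marker of an
   empty trail and leave every other marker alone. *)
Definition marker (r : tally) : F2 :=
  if (height r =? 0)%Z then bottom_mark (sval (trail r)) else one.

Definition at_base (r : tally) : bool :=
  (height r =? 0)%Z && nilp (sval (trail r)).

Lemma Fbar_marker r : Fbar (marker r).
Proof.
case: Fbar_subgroup => Fbar1 _ _; rewrite /marker /bottom_mark.
case: ifP => _ //; case: (sval (trail r)) => [|b t] //.
by case: (last b t) => [[|k] []] //; apply: Fbar_a_elt.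
Qed.

Lemma bottom_mark_pushw k w :
  w != [::] -> bottom_mark (pushw (k, true) w) = bottom_mark w.
Proof.
case: w => [|b [|c t]] //= _; case: ifP => //.
by rewrite cancelwE => /eqP ->; case: k.
Qed.

Lemma climb_from_base r k : height r = 0%Z ->
  iter k.+1 (climb false) r = Tally (Z.of_nat k.+1) (pushs (k.+1, true) (trail r)).
Proof.
move=> r0; elim: k => [|k IHk]; first by rewrite /= /climb r0.
rewrite iterS IHk /climb /mark; cbn [height trail].
have -> : (0 <? Z.of_nat k.+1)%Z by apply/Z.ltb_lt; lia.
have -> : (Z.of_nat k.+1 + 1 = Z.of_nat k.+2)%Z by lia.
have -> : (0 <? Z.of_nat k.+2)%Z by apply/Z.ltb_lt; lia.
by rewrite !Nat2Z.id (pushsK true).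
Qed.

Lemma marker_excursion i r : 0 < i ->
  marker (iter i (shift true) (iter i (climb false) r)) =
  if at_base r then a_elt i else marker r.
Proof.
have height_shift j r' :
    height (iter j (shift true) r') = (height r' - Z.of_nat j)%Z.
  by elim: j => /= [|j ->]; lia.
have height_climb j : height (iter j (climb false) r) = (height r + Z.of_nat j)%Z.
  by elim: j => /= [|j ->]; lia.
have trail_shift j r' : trail (iter j (shift true) r') = trail r'.
  by elim: j => //= j ->.
rewrite /marker /at_base height_shift trail_shift height_climb Z.add_simpl_r.
case: i => // k _; case: (Z.eqb_spec (height r) 0) => [r0|] //.
rewrite climb_from_base //; cbn [trail sval pushs].
by case: (sval (trail r)) => [|b t] //; apply: bottom_mark_pushw.
Qed.

Lemma marker_at_base r : at_base r -> marker r = one.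
Proof. by case/andP; rewrite /marker => ->; case: (sval (trail r)). Qed.

Definition expb (g : F2) (e : bool) : F2 := if e then inv g else g.

Lemma Fbar_expb g e : Fbar g -> Fbar (expb g e).
Proof. by case: Fbar_subgroup => _ _ Finv; case: e => //; apply: Finv. Qed.

Section ExtendedAction.

Variables (X : Type) (xact : X -> F2 -> X).
Hypothesis xact1 : forall x, xact x one = x.
Hypothesis xactM : forall x u v, xact (xact x u) v = xact x (mul u v).

Lemma xact_expbK g e : cancel (xact^~ (expb g e)) (xact^~ (expb g (~~ e))).
Proof. by move=> x; rewrite xactM; case: e; rewrite /= ?mulVg ?mulgV xact1. Qed.

Definition ylevel (n : Z) (e : bool) (c : X * tally) : X * tally :=
  if (n =? -1)%Z then (xact c.1 (expb (marker c.2) e), c.2)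
  else (c.1, ymove n e c.2).

Lemma ylevelK n e : cancel (ylevel n e) (ylevel n (~~ e)).
Proof.
case=> x r; rewrite /ylevel; case: (n =? -1)%Z => /=; first by rewrite xact_expbK.
by rewrite ymoveK.
Qed.

Lemma iter_ylevel n e i x r : (n <> -1)%Z ->
  iter i (ylevel n e) (x, r) = (x, iter i (ymove n e) r).
Proof.
by move=> /Z.eqb_neq n_neq; elim: i => //= i ->; rewrite /ylevel n_neq.
Qed.

Definition act_letter (l : letter) (o : Z * (X * tally)) : Z * (X * tally) :=
  let: (n, c) := o in if l.1 then (n, ylevel n l.2 c) else ((n + zsign l.2)%Z, c).

Lemma act_letterK l : cancel (act_letter l) (act_letter (inv_letter l)).
Proof.
case: l => [[] e] [n c] /=; first by rewrite ylevelK.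
by rewrite zsignK.
Qed.

Definition act (g : F2) (o : Z * (X * tally)) : Z * (X * tally) :=
  actw act_letter (sval g) o.

Lemma act1 o : act one o = o.
Proof. by []. Qed.

Lemma actM u v o : act (mul u v) o = act v (act u o).
Proof. by rewrite /act /= (actw_reducew act_letterK) /actw foldl_cat. Qed.

Lemma act_pow u k o : act (pow u k) o = iter k (act u) o.
Proof. exact: (ra_pow act1 actM). Qed.

Lemma act_xgen n c : act xgen (n, c) = ((n + 1)%Z, c).
Proof. by []. Qed.

Lemma act_invxgen n c : act (inv xgen) (n, c) = ((n - 1)%Z, c).
Proof. by []. Qed.

Lemma act_ygen n c : act ygen (n, c) = (n, ylevel n false c).
Proof. by []. Qed.

Lemma act_invygen n c : act (inv ygen) (n, c) = (n, ylevel n true c).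
Proof. by []. Qed.

Lemma iter_act_ygen k n c : iter k (act ygen) (n, c) = (n, iter k (ylevel n false) c).
Proof. by elim: k => //= k ->. Qed.

Lemma act_conjugator i n c : act (a_conjugator i) (n, c) =
  ((n + 1)%Z, iter i (ylevel (n + 2) false) (iter i (ylevel (n + 1) false) c)).
Proof.
rewrite /a_conjugator actM act_pow /= !actM !act_pow !act_xgen !iter_act_ygen.
rewrite act_invxgen.
have -> : (n + 1 + zsign (false, false).2 = n + 2)%Z by rewrite /=; lia.
by congr pair; lia.
Qed.

Lemma act_conjugator_inv i n c : act (inv (a_conjugator i)) (n, c) =
  ((n - 1)%Z, iter i (ylevel n true) (iter i (ylevel (n + 1) true) c)).
Proof.
set d := iter i _ _.
have E : act (a_conjugator i) ((n - 1)%Z, d) = (n, c).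
  rewrite act_conjugator Z.sub_add (_ : (n - 1 + 2 = n + 1)%Z); last by lia.
  by rewrite (iter_cancel i (ylevelK n true)) (iter_cancel i (ylevelK (n + 1) true)).
by rewrite -E (raK act1 actM).
Qed.

Definition a_walk i n : X * tally -> X * tally :=
  ylevel (n - 1) true \o iter i (ylevel (n + 1) false) \o iter i (ylevel n false) \o
  ylevel (n - 1) false \o iter i (ylevel n true) \o iter i (ylevel (n + 1) true).

Lemma act_a_elt i n c : act (a_elt i) (n, c) = (n, a_walk i n c).
Proof.
rewrite a_eltE actM !(ra_conj actM) act_conjugator_inv act_ygen act_conjugator.
rewrite Z.sub_add (_ : (n - 1 + 2 = n + 1)%Z); last by lia.
by rewrite act_invxgen act_invygen act_xgen Z.sub_add.
Qed.

Lemma ylevel_succ n e : (0 < n)%Z -> ylevel (n + 1) e =1 ylevel n (~~ e).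
Proof.
move=> n_gt0 [x r]; rewrite /ylevel.
have -> : (n + 1 =? -1)%Z = false by apply/Z.eqb_neq; lia.
have -> : (n =? -1)%Z = false by apply/Z.eqb_neq; lia.
by rewrite ymove_succ.
Qed.

Lemma ylevel_lt n e : (n < -1)%Z -> ylevel n e =1 id.
Proof.
move=> n_lt [x r]; rewrite /ylevel ymove_neg; last by lia.
by have -> : (n =? -1)%Z = false by apply/Z.eqb_neq; lia.
Qed.

Lemma a_walk_pos i n : (0 < n)%Z -> a_walk i n =1 id.
Proof.
move=> n_gt0 c; rewrite /a_walk /= !(eq_iter (ylevel_succ _ n_gt0)) /=.
rewrite (iter_cancel i (ylevelK n false)) (ylevelK _ false).
by rewrite (iter_cancel i (ylevelK n false)).
Qed.

Lemma a_walk_neg i n : (n < 0)%Z -> a_walk i n =1 id.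
Proof.
move=> n_lt0 c; rewrite /a_walk /= !ylevel_lt; try lia.
by rewrite (iter_cancel i (ylevelK n true)) (iter_cancel i (ylevelK (n + 1) true)).
Qed.

Lemma a_walk_base i x r : 0 < i ->
  a_walk i 0 (x, r) = if at_base r then (xact x (a_elt i), r) else (x, r).
Proof.
move=> i_gt0; rewrite /a_walk /= !iter_ylevel //=.
rewrite !(eq_iter (ymove1 _)) !(eq_iter (ymove0 _)) /=.
rewrite (iter_cancel i (shiftK true)) (iter_cancel i (climbK false)) /ylevel /=.
rewrite marker_excursion //; case: ifP => [/marker_at_base ->|_].
  by rewrite /= inv1 xact1.
by rewrite (xact_expbK _ false).
Qed.

Definition base_act (g : F2) (o : Z * (X * tally)) : Z * (X * tally) :=
  let: (n, (x, r)) := o in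
  if (n =? 0)%Z && at_base r then (n, (xact x g, r)) else o.

Lemma base_act1 o : base_act one o = o.
Proof. by case: o => n [x r] /=; case: ifP => // _; rewrite xact1. Qed.

Lemma base_actM u v o : base_act (mul u v) o = base_act v (base_act u o).
Proof. by case: o => n [x r] /=; case: ifP => /= [->|-> //]; rewrite xactM. Qed.

Lemma act_a_elt_base i : 0 < i -> act (a_elt i) =1 base_act (a_elt i).
Proof.
move=> i_gt0 [n [x r]]; rewrite act_a_elt /=.
case: (Z.ltb_spec 0 n) => [n_gt0|n_le0].
  rewrite a_walk_pos //; suff -> : (n =? 0)%Z = false by [].
  by apply/Z.eqb_neq; lia.
case: (Z.eqb_spec n 0) => [-> |n_neq0]; first by rewrite a_walk_base //; case: ifP.
by rewrite a_walk_neg //; lia.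
Qed.

Lemma act_Fbar g : Fbar g -> act g =1 base_act g.
Proof.
move=> Fg; apply: (Fg (fun g => act g =1 base_act g)) => [|s [i [i_gt0 ->]]].
  exact: (ra_agree_subgroup act1 actM base_act1 base_actM).
exact: act_a_elt_base.
Qed.

Lemma act_point_invariant (Q : X -> Prop) :
  (forall x q, Fbar q -> Q x -> Q (xact x q)) ->
  forall g o, Q o.2.1 -> Q (act g o).2.1.
Proof.
move=> Qxact g; rewrite /act.
elim: (sval g) => //= l w IHw [n [x r]] Qx; apply: IHw.
case: l => [[] e] //=; rewrite /ylevel; case: ifP => //= _.
by apply: Qxact => //; apply: Fbar_expb; apply: Fbar_marker.
Qed.

End ExtendedAction.

(** * Right cosets of the normal closure of N in Fbar *)

Definition rtrans (C : F2 -> Prop) (q : F2) : F2 -> Prop := fun z => C (mul z (inv q)).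

Lemma rtrans1 C : rtrans C one = C.
Proof. by apply: functional_extensionality => z; rewrite /rtrans inv1 mulg1. Qed.

Lemma rtransM C u v : rtrans (rtrans C u) v = rtrans C (mul u v).
Proof. by apply: functional_extensionality => z; rewrite /rtrans inv_mul mulA. Qed.

Lemma rtrans_subgroup (H : F2 -> Prop) h : subgroup H -> H h -> rtrans H h = H.
Proof.
case=> _ Hmul Hinv Hh; apply: functional_extensionality => z.
apply: propositional_extensionality; split=> [Hzh|Hz].
  by rewrite -(mulgKV h z); apply: Hmul Hzh Hh.
exact: Hmul _ _ Hz (Hinv _ Hh).
Qed.

Section Main.

Variable N : F2 -> Prop.
Hypothesis NFbar : forall n, N n -> Fbar n.

Definition Fbar_coset (C : F2 -> Prop) : Prop :=
  exists2 p, Fbar p & C = rtrans (ncl Fbar N) p.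

Lemma Fbar_coset_rtrans C q : Fbar q -> Fbar_coset C -> Fbar_coset (rtrans C q).
Proof.
case: Fbar_subgroup => _ Fmul _ Fq [p Fp ->].
by exists (mul p q); [apply: Fmul | rewrite rtransM].
Qed.

Lemma rtrans_ncl_mulN p n : Fbar p -> N n ->
  rtrans (ncl Fbar N) (mul p n) = rtrans (ncl Fbar N) p.
Proof.
move=> Fp Nn; have -> : mul p n = mul (conj n (inv p)) p.
  by rewrite /conj invK !mulA mulVg mulg1.
rewrite -rtransM (rtrans_subgroup (ncl_subgroup _ _)) //.
apply: ncl_conj; last exact: ncl_base.
by case: Fbar_subgroup => _ _; apply.
Qed.

Lemma ncl_fixes_Fbar_cosets g o :
  ncl F2all N g -> Fbar_coset o.2.1 -> act rtrans g o = o.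
Proof.
move=> Ng; apply: (ncl_fixes (act1 rtrans) (actM rtrans1 rtransM)
                            (Q := fun o => Fbar_coset o.2.1) _ _ Ng) => [h o'|].
  exact: act_point_invariant Fbar_coset_rtrans h o'.
move=> n [m [C r]] Nn /= [p Fp ->].
rewrite (act_Fbar rtrans1 rtransM (NFbar Nn)) /=; case: ifP => // _.
by rewrite rtransM rtrans_ncl_mulN.
Qed.

Lemma Fbar_ncl_F2all_sub g : Fbar g -> ncl F2all N g -> ncl Fbar N g.
Proof.
move=> Fg Ng.
pose o := (0%Z, (ncl Fbar N, Tally 0 (exist _ [::] isT : stack))).
have Qo : Fbar_coset o.2.1 by exists one; [case: Fbar_subgroup | rewrite rtrans1].
have := ncl_fixes_Fbar_cosets Ng Qo.
rewrite (act_Fbar rtrans1 rtransM Fg) /= => -[/(congr1 (fun C => C g))].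
rewrite /rtrans mulgV => <-.
by case: (ncl_subgroup Fbar N).
Qed.

Lemma ncl_Fbar_sub g : ncl Fbar N g -> Fbar g /\ ncl F2all N g.
Proof.
move=> Ng; apply: (Ng (fun g => Fbar g /\ ncl F2all N g)) => [||n Nn|k h Fk [Fh Nh]].
- exact: subgroupI Fbar_subgroup (ncl_subgroup _ _).
- by move=> h [].
- by split; [apply: NFbar | apply: ncl_base].
- by split; [apply: subgroup_conj Fbar_subgroup Fh Fk | apply: ncl_conj].
Qed.

End Main.

Theorem lemma3p1 (N : F2 -> Prop) :
  subgroup N -> (forall g, N g -> Fbar g) ->
  forall g, (Fbar g /\ ncl F2all N g) <-> ncl Fbar N g.
Proof.
move=> _ NFbar g; split; first by case; apply: Fbar_ncl_F2all_sub.
exact: ncl_Fbar_sub.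
Qed.
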